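(* Let $M$ be a score distribution model with non-negative weights ($w_M(j,k)\ge 0$ for all $j,k$). Let $s_1,s_2$ be road segments with $s_1.\mathit{lb} > s_2.\mathit{ub}$. Then $s_2$ does not contain an optimal subsegment (indeed, no network point of $s_2$ has maximal score $\mathit{score}_M$ over all network points).
   Context: A road network is a directed graph $G=(V,E)$ embedded in the plane: each vertex $v$ has a location $\mathit{loc}(v)\in\mathbb{R}^2$, and each edge $e=(v_i,v_j)$ has length $\|e\|$ equal to the Euclidean distance between its endpoints. A network point is a pair $p=(\mathit{eid},d)$ where $\mathit{eid}$ identifies an edge $e=(v_i,v_j)$ and $d\in[0,1]$ is the ratio of the distance from $v_i$ to the point to $\|e\|$; $P$ is the set of all network points. A road segment is a sequence $\langle p_1,\dots,p_n\rangle$, $n\ge 2$, with $p_1,p_n\in P$, $p_2,\dots,p_{n-1}\in V$, $p_1,p_2$ on the same edge, $p_{n-1},p_n$ on the same edge, and consecutive interior vertices joined by edges; a segment is identified with the set of network points it passes through, and $S$ is the set of segments. A facility $f$ is located at a network point $f.p$. A route usage object $\mathit{ro}=(\mathit{rid},r,\mathit{count},\langle \mathit{usage}_1,\dots,\mathit{usage}_{\mathit{count}}\rangle)$ has a route $r$ which is a road segment. A route $r$ covers a segment $s'$ if every point of $s'$ lies on $r$, and intersects $s'$ if some point of $s'$ lies on $r$; $s'.C$ (resp. $s'.I$) is the set of route usage objects whose routes cover (resp. intersect) $s'$. For a threshold $\delta>0$, a facility $f$ attracts $r$ if the shortest network distance from $f.p$ to $r$ is at most $\delta$. Each route has a score $\mathit{score}(r)\ge0$.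 A score distribution model $M$: the facilities attracting $r$ partition $r$ into $k$ consecutive subsegments and the $j$-th receives $w_M(j,k)\,\mathit{score}(r)$. The score $\mathit{score}_M(p)$ of a network point $p$ is the sum over all route usage objects whose route contains $p$ of the amount assigned by $M$ to the subsegment of that route containing $p$. For a segment $s$ and route $r_i$ intersecting $s$, $w_M(j_i,k_i)$ denotes the fraction of $\mathit{score}(r_i)$ that $M$ assigns to the $j_i$-th of the $k_i$ subsegments of $r_i$, the one in which $s$ lies. Then $s.\mathit{lb}=\sum_{r_i\in s.C} w_M(j_i,k_i)\mathit{score}(r_i)$ and $s.\mathit{ub}=\sum_{r_i\in s.I} w_M(j_i,k_i)\mathit{score}(r_i)$ (if $s$ meets several subsegments of a route because facilities lie on $s$, the lower bound takes the smallest and the upper bound the largest of these values). An optimal segment is a segment $s_{\mathit{opt}}$ such that (1) all points of $s_{\mathit{opt}}$ have the same $\mathit{score}_M$; (2) for all $p\in s_{\mathit{opt}}$ and $p'\in P$, $\mathit{score}_M(p')\le\mathit{score}_M(p)$; (3) there is no segment $s'\in S$ with $s_{\mathit{opt}}\subset s'$ satisfying (1) and (2). An optimal subsegment is a subsegment of an optimal segment. *)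

From HB Require Import structures.
From mathcomp Require Import all_boot all_order all_algebra.
From mathcomp Require Import boolp reals.
Set Implicit Arguments. Unset Strict Implicit. Unset Printing Implicit Defensive.
Import Order.TTheory GRing.Theory Num.Theory.
Local Open Scope ring_scope.

Record road_network (R : realType) := RoadNetwork {
  vertex : finType;
  edge : finType;
  esrc : edge -> vertex;
  etgt : edge -> vertex;
  loc : vertex -> (R * R)%type }.

Section RoadNet.
Variable R : realType.
Variable G : road_network R.

Definition edge_len (e : edge G) : R :=
  let a := loc (esrc e) in let b := loc (etgt e) in
  Num.sqrt ((a.1 - b.1) ^+ 2 + (a.2 - b.2) ^+ 2).

Definition netpoint := (edge G * R)%type.
Definition is_netpoint (p : netpoint) : Prop := 0 <= p.2 <= 1.

Inductive place := PVert of vertex G | PInner of edge G & R.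
Definition place_of (p : netpoint) : place :=
  if p.2 == 0 then PVert (esrc p.1)
  else if p.2 == 1 then PVert (etgt p.1) else PInner p.1 p.2.

(* A road segment <p1, v2, ..., v_{n-1}, pn>, represented by the sequence of
   edges it traverses e1 :: rest, the ratio d1 of p1 on e1 and the ratio dn
   of pn on the last edge. *)
Record segment := Segment {
  seg_d1 : R; seg_e1 : edge G; seg_rest : seq (edge G); seg_dn : R }.

Definition seg_edges (s : segment) := seg_e1 s :: seg_rest s.
Definition seg_size (s : segment) := size (seg_edges s).
Definition seg_edge (s : segment) (i : nat) := nth (seg_e1 s) (seg_edges s) i.
Definition seg_last (s : segment) := last (seg_e1 s) (seg_rest s).
Definition seg_lo (s : segment) (i : nat) : R := if i == 0%N then seg_d1 s else 0.
Definition seg_hi (s : segment) (i : nat) : R :=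
  if i == (seg_size s).-1 then seg_dn s else 1.

Definition seg_valid (s : segment) : Prop :=
  [/\ 0 <= seg_d1 s <= 1, 0 <= seg_dn s <= 1,
      path (fun e f => etgt e == esrc f) (seg_e1 s) (seg_rest s)
    & seg_rest s = [::] -> seg_d1 s <= seg_dn s].

Definition on_seg (s : segment) (x : place) : Prop :=
  exists i, (i < seg_size s)%N /\
    exists d, seg_lo s i <= d <= seg_hi s i /\ place_of (seg_edge s i, d) = x.

Definition seg_start (s : segment) := place_of (seg_e1 s, seg_d1 s).
Definition seg_end (s : segment) := place_of (seg_last s, seg_dn s).
Definition seg_length (s : segment) : R :=
  \sum_(i < seg_size s) (seg_hi s i - seg_lo s i) * edge_len (seg_edge s i).

Definition covers (r s : segment) : Prop := forall x, on_seg s x -> on_seg r x.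
Definition intersects (r s : segment) : Prop := exists x, on_seg s x /\ on_seg r x.

Definition netdist_le (a : place) (r : segment) (delta : R) : Prop :=
  forall eps, 0 < eps -> exists w, [/\ seg_valid w, seg_start w = a,
     on_seg r (seg_end w) & seg_length w < delta + eps].

Definition attracts (delta : R) (f : netpoint) (r : segment) : Prop :=
  netdist_le (place_of f) r delta.

Record route_usage (U : Type) := RouteUsage {
  rid : nat; route : segment; rcount : nat; rusages : seq U }.

Definition route_usage_valid (U : Type) (ro : route_usage U) : Prop :=
  seg_valid (route ro) /\ size (rusages ro) = rcount ro.

(* A score distribution model: weights w_M(j,k) (j is 1-based) and the rule
   by which the facilities attracting a route partition it into its
   consecutive subsegments. *)
Record score_model := ScoreModel {
  wM : nat -> nat -> R;
  partM : segment -> seq netpoint -> seq segment }.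

Definition is_partition (r : segment) (subs : seq segment) : Prop :=
  [/\ subs <> [::] /\
        (forall j, (j < size subs)%N -> seg_valid (nth r subs j)),
      forall x, on_seg r x <->
        exists j, (j < size subs)%N /\ on_seg (nth r subs j) x,
      forall j, (j.+1 < size subs)%N ->
        seg_end (nth r subs j) = seg_start (nth r subs j.+1),
      seg_start (nth r subs 0) = seg_start r
    & seg_end (last r subs) = seg_end r].

Section Scores.
Variables (U : Type) (M : score_model) (delta : R) (fs : seq netpoint)
  (ros : seq (route_usage U)) (score : route_usage U -> R).

Definition attracting (ro : route_usage U) : seq netpoint :=
  [seq f <- fs | `[< attracts delta f (route ro) >]].
Definition subsegs (ro : route_usage U) : seq segment :=
  partM M (route ro) (attracting ro).
Definition nsub (ro : route_usage U) : nat := size (subsegs ro).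
Definition subseg (ro : route_usage U) (j : nat) : segment :=
  nth (route ro) (subsegs ro) j.
(* 0-based index of the (first) subsegment of ro containing x *)
Definition sub_index (ro : route_usage U) (x : place) : nat :=
  find (fun s => `[< on_seg s x >]) (subsegs ro).

Definition score_at (x : place) : R :=
  \sum_(ro <- ros | `[< on_seg (route ro) x >])
     wM M (sub_index ro x).+1 (nsub ro) * score ro.

Definition meet_weights (ro : route_usage U) (s : segment) : seq R :=
  [seq wM M j.+1 (nsub ro) | j <- iota 0 (nsub ro) & `[< intersects (subseg ro j) s >]].

Definition seg_lb (s : segment) : R :=
  \sum_(ro <- ros | `[< covers (route ro) s >])
     (\big[Order.min/head 0 (meet_weights ro s)]_(x <- meet_weights ro s) x) * score ro.
Definition seg_ub (s : segment) : R :=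
  \sum_(ro <- ros | `[< intersects (route ro) s >])
     (\big[Order.max/head 0 (meet_weights ro s)]_(x <- meet_weights ro s) x) * score ro.

Definition same_score (s : segment) : Prop :=
  exists c, forall x, on_seg s x -> score_at x = c.
Definition max_score (s : segment) : Prop :=
  forall x, on_seg s x -> forall p, is_netpoint p -> score_at (place_of p) <= score_at x.
Definition optimal_segment (s : segment) : Prop :=
  [/\ seg_valid s, same_score s, max_score s &
      ~ exists s', [/\ seg_valid s', covers s' s, (exists x, on_seg s' x /\ ~ on_seg s x),
                      same_score s' & max_score s']].
Definition optimal_subsegment (s : segment) : Prop :=
  seg_valid s /\ exists so, optimal_segment so /\ covers so s.

End Scores.
End RoadNet.

(* The lower bound of s1 is at most the score of any point of s1 and the upper
   bound of s2 is at least the score of any point of s2: a route through a point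
   of s2 intersects s2 and contributes at most its largest meeting weight, while
   a route covering s1 passes through every point of s1 and contributes at least
   its smallest meeting weight.  Hence every point of s2 scores strictly less
   than the start of s1, so no point of s2 attains the maximal score. *)
From HB Require Import structures.
From mathcomp Require Import all_boot all_order all_algebra.
From mathcomp Require Import boolp reals.
From Stdlib Require List.
Import Order.TTheory GRing.Theory Num.Theory.
Local Open Scope ring_scope.
Set Implicit Arguments. Unset Strict Implicit.

Lemma ler_sum_subpred (T : Type) (R : numDomainType) (r : seq T)
    (P Q : pred T) (F G : T -> R) :
  (forall i, List.In i r -> P i -> Q i /\ F i <= G i) ->
  (forall i, List.In i r -> Q i -> 0 <= G i) ->
  \sum_(i <- r | P i) F i <= \sum_(i <- r | Q i) G i.
Proof.
elim: r => [|i r IHr] PQ G_ge0; first by rewrite !big_nil.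
rewrite !big_cons.
have le_rest := IHr (fun j rj => PQ j (or_intror rj))
                    (fun j rj => G_ge0 j (or_intror rj)).
have [Pi|_] := boolP (P i).
  by have [-> FGi] := PQ i (or_introl erefl) Pi; exact: lerD.
case: ifP => Qi //; rewrite -[leLHS]add0r.
by apply: lerD => //; exact: G_ge0 (or_introl erefl) Qi.
Qed.

Lemma bigmax_head_ge0 (R : realDomainType) (l : seq R) :
  (forall y, y \in l -> 0 <= y) -> 0 <= \big[Order.max/head 0 l]_(y <- l) y.
Proof.
case: l => [|y l] l_ge0; first by rewrite big_nil.
apply: le_trans (l_ge0 y (mem_head _ _)) _.
exact: (le_bigmax_seq _ _ xpredT id (mem_head _ _)).
Qed.

Lemma seg_start_on (R : realType) (G : road_network R) (s : segment G) :
  seg_valid s -> on_seg s (seg_start s).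
Proof.
move=> [/andP[d1_ge0 d1_le1] _ _ d1_le_dn]; exists 0%N; split=> //.
exists (seg_d1 s); split=> //; rewrite /seg_lo /seg_hi /seg_size /= lexx /=.
by case: (seg_rest s) d1_le_dn => [|e r] /= => [->|].
Qed.

Section ScoreBounds.
Variables (R : realType) (G : road_network R) (U : Type) (M : score_model G).
Variables (delta : R) (fs : seq (netpoint G)) (ros : seq (route_usage G U)).
Variable score : route_usage G U -> R.

Hypothesis wM_ge0 : forall j k, 0 <= wM M j k.
Hypothesis score_ge0 : forall ro, List.In ro ros -> 0 <= score ro.
Hypothesis subsegs_partition :
  forall ro, List.In ro ros -> is_partition (route ro) (subsegs M delta fs ro).

Lemma sub_indexP (ro : route_usage G U) x :
  is_partition (route ro) (subsegs M delta fs ro) -> on_seg (route ro) x ->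
  (sub_index M delta fs ro x < nsub M delta fs ro)%N /\
  on_seg (subseg M delta fs ro (sub_index M delta fs ro x)) x.
Proof.
move=> [_ cover _ _ _] /cover[j [lt_j on_j]].
have has_x : has (fun s => `[< on_seg s x >]) (subsegs M delta fs ro).
  by apply/(has_nthP (route ro)); exists j => //; apply/asboolP.
split; first by rewrite /sub_index /nsub -has_find.
by apply/asboolP; exact: (nth_find (route ro) has_x).
Qed.

Lemma sub_index_meet_weights (ro : route_usage G U) (s : segment G) x :
  is_partition (route ro) (subsegs M delta fs ro) ->
  on_seg (route ro) x -> on_seg s x ->
  wM M (sub_index M delta fs ro x).+1 (nsub M delta fs ro)
    \in meet_weights M delta fs ro s.
Proof.
move=> part_ro ro_x s_x; have [lt_idx sub_x] := sub_indexP part_ro ro_x.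
apply: map_f; rewrite mem_filter mem_iota /= add0n lt_idx andbT.
by apply/asboolP; exists x.
Qed.

Lemma score_at_le_seg_ub (s : segment G) x :
  on_seg s x -> score_at M delta fs ros score x <= seg_ub M delta fs ros score s.
Proof.
move=> s_x; apply: ler_sum_subpred => ro ros_ro.
  move=> /asboolP ro_x; split; first by apply/asboolP; exists x.
  apply: ler_wpM2r; first exact: score_ge0.
  apply: (le_bigmax_seq _ _ xpredT id) => //.
  exact: sub_index_meet_weights (subsegs_partition ros_ro) ro_x s_x.
move=> _; apply: mulr_ge0; last exact: score_ge0.
by apply: bigmax_head_ge0 => y /mapP[j _ ->].
Qed.

Lemma seg_lb_le_score_at (s : segment G) x :
  on_seg s x -> seg_lb M delta fs ros score s <= score_at M delta fs ros score x.
Proof.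
move=> s_x; apply: ler_sum_subpred => ro ros_ro.
  move=> /asboolP covers_s; have ro_x := covers_s x s_x.
  split; first exact/asboolP.
  apply: ler_wpM2r; first exact: score_ge0.
  apply: (ge_bigmin_seq _ _ xpredT id) => //.
  exact: sub_index_meet_weights (subsegs_partition ros_ro) ro_x s_x.
by move=> _; apply: mulr_ge0; [exact: wM_ge0 | exact: score_ge0].
Qed.

Lemma score_at_lt_of_bounds (s1 s2 : segment G) x1 x2 :
  seg_ub M delta fs ros score s2 < seg_lb M delta fs ros score s1 ->
  on_seg s1 x1 -> on_seg s2 x2 ->
  score_at M delta fs ros score x2 < score_at M delta fs ros score x1.
Proof.
move=> lt_ub_lb s1_x1 s2_x2.
apply: le_lt_trans (score_at_le_seg_ub s2_x2) _.
exact: lt_le_trans lt_ub_lb (seg_lb_le_score_at s1_x1).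
Qed.

End ScoreBounds.

Theorem lemma3 (R : realType) (G : road_network R) (U : Type)
  (M : score_model G) (delta : R) (fs : seq (netpoint G))
  (ros : seq (route_usage G U)) (score : route_usage G U -> R)
  (s1 s2 : segment G) :
  (forall j k, 0 <= wM M j k) ->
  0 < delta ->
  (forall f, List.In f fs -> is_netpoint f) ->
  (forall ro, List.In ro ros -> route_usage_valid ro) ->
  (forall ro, List.In ro ros -> 0 <= score ro) ->
  (forall ro, List.In ro ros -> is_partition (route ro) (subsegs M delta fs ro)) ->
  seg_valid s1 -> seg_valid s2 ->
  seg_ub M delta fs ros score s2 < seg_lb M delta fs ros score s1 ->
  (~ exists s, optimal_subsegment M delta fs ros score s /\ covers s2 s) /\
  (~ exists p, [/\ is_netpoint p, on_seg s2 (place_of p) &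
      forall p', is_netpoint p' ->
        score_at M delta fs ros score (place_of p') <= score_at M delta fs ros score (place_of p)]).
Proof.
move=> wM_ge0 _ _ _ score_ge0 subsegs_partition valid_s1 valid_s2 lt_ub_lb.
pose p1 : netpoint G := (seg_e1 s1, seg_d1 s1).
have netpoint_p1 : is_netpoint p1 by case: valid_s1.
have s1_p1 : on_seg s1 (place_of p1) := seg_start_on valid_s1.
have beaten := score_at_lt_of_bounds wM_ge0 score_ge0 subsegs_partition lt_ub_lb s1_p1.
split.
  move=> [s [[valid_s [so [[_ _ max_so _] so_covers]]] s2_covers]].
  have s_start := seg_start_on valid_s.
  have := max_so _ (so_covers _ s_start) p1 netpoint_p1.
  by rewrite leNgt (beaten _ (s2_covers _ s_start)).
move=> [p [_ s2_p max_p]].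
by have := max_p p1 netpoint_p1; rewrite leNgt beaten.
Qed.
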